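(* For any density operators $\varrho,\sigma$ on a finite-dimensional Hilbert space and any $\alpha,\beta\in(0,1)$, \[ D_\alpha(\varrho\|\sigma)\ge\frac{\alpha(1-\beta)}{\alpha-2\alpha\beta+\beta}D_\beta(\varrho\|\sigma). \]
   Context: $D_\alpha(\varrho\|\sigma)=\frac{1}{\alpha-1}\log\operatorname{Tr}\varrho^\alpha\sigma^{1-\alpha}$ is the Petz-type Rényi divergence for $\alpha\in(0,1)$ (real powers taken on the support; $+\infty$ if the trace is $0$). *)

From HB Require Import structures.
From mathcomp Require Import all_boot all_order all_algebra.
From mathcomp Require Import sesquilinear spectral.
From mathcomp Require Import complex.
From mathcomp Require Import all_classical all_reals ereal exp.

Set Implicit Arguments.
Unset Strict Implicit.
Unset Printing Implicit Defensive.

Import Order.TTheory GRing.Theory Num.Theory Num.Def.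
Local Open Scope ring_scope.
Local Open Scope complex_scope.

Definition psdmx (R : realType) (n : nat) (A : 'M[R[i]]_n) : Prop :=
  A \is hermsymmx /\
  forall u : 'rV[R[i]]_n, 0 <= (u *m A *m (map_mx conjC u^T)) 0 0.

Definition density (R : realType) (n : nat) (A : 'M[R[i]]_n) : Prop :=
  psdmx A /\ \tr A = 1.

(* functional calculus A |-> A^a with the real power taken on the support
   (eigenvalue 0 is sent to 0), via the unitary spectral decomposition
   A = P^-1 diag(d) P of mathcomp's spectral.v *)
Definition mxpow_supp (R : realType) (n : nat) (a : R) (A : 'M[R[i]]_n)
  : 'M[R[i]]_n :=
  invmx (spectralmx A)
  *m diag_mx (map_mx (fun x : R[i] =>
        if x == 0 then 0 else (powR (complex.Re x) a)%:C) (spectral_diag A))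
  *m spectralmx A.

(* Tr rho^a sigma^(1-a)  (a real number for density operators) *)
Definition petz_trace (R : realType) (n : nat) (a : R) (rho sigma : 'M[R[i]]_n)
  : R :=
  complex.Re (\tr (mxpow_supp a rho *m mxpow_supp (1 - a) sigma)).

Definition petz_renyi (R : realType) (n : nat) (a : R) (rho sigma : 'M[R[i]]_n)
  : \bar R :=
  let t := petz_trace a rho sigma in
  if t == 0 then +oo%E else ((ln t) / (a - 1))%:E.

(* Diagonalising rho = sum_i p_i |e_i><e_i| and sigma = sum_j q_j |f_j><f_j|
   gives Tr rho^t sigma^(1-t) = Q(t) := sum_ij w_ij p_i^t q_j^(1-t), where the
   overlaps w_ij = |<e_i, f_j>|^2 form a doubly stochastic matrix.  Each term
   is log-affine in t, so ln Q is convex (Hoelder), and Q <= 1 on [0, 1] by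
   weighted AM-GM.  A convex g with g(0), g(1) <= 0 satisfies
   g(a) <= (a/b) g(b) for a <= b and g(a) <= ((1-a)/(1-b)) g(b) for a >= b;
   for g = ln Q either bound yields the inequality after dividing by a - 1 < 0.
   Finally Q vanishes either everywhere or nowhere, which settles the case of
   infinite divergences. *)

From mathcomp Require Import all_boot all_order all_algebra.
From mathcomp Require Import sesquilinear spectral complex.
From mathcomp Require Import all_classical all_reals ereal sequences exp convex.
From mathcomp Require Import ring lra.

Set Implicit Arguments.
Unset Strict Implicit.
Unset Printing Implicit Defensive.

Import Order.TTheory GRing.Theory Num.Theory.
Local Open Scope ring_scope.

Section RealInequalities.
Variable R : realType.
Implicit Types a p q s t u v x y : R.

Lemma expR_convex t u v : 0 <= t <= 1 ->
  expR (t * u + (1 - t) * v) <= t * expR u + (1 - t) * expR v.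
Proof.
by case/andP=> t0 t1; have := @convex_expR R (Itv01 t0 t1) u v; rewrite !convRE.
Qed.

Lemma expR_convex_scaled t u v x y : 0 <= t <= 1 -> 0 < x -> 0 < y ->
  expR (t * u + (1 - t) * v) <=
  expR (t * ln x + (1 - t) * ln y) *
    (t * (expR u / x) + (1 - t) * (expR v / y)).
Proof.
move=> t01 x0 y0.
have -> : t * u + (1 - t) * v =
    (t * ln x + (1 - t) * ln y) + (t * (u - ln x) + (1 - t) * (v - ln y)).
  by ring.
rewrite expRD ler_wpM2l ?expR_ge0 //.
by rewrite -[x in expR u / x]lnK ?posrE // -[y in expR v / y]lnK ?posrE //
  -!expRB expR_convex.
Qed.

Definition powR_supp x a := if x == 0 then 0 else x `^ a.

Lemma powR_supp_ge0 x a : 0 <= powR_supp x a.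
Proof. by rewrite /powR_supp; case: ifP => // _; exact: powR_ge0. Qed.

Lemma powR_supp_eq0 x a : (powR_supp x a == 0) = (x == 0).
Proof.
rewrite /powR_supp; case: ifPn => [_|x0]; first by rewrite eqxx.
by rewrite powR_eq0 (negbTE x0).
Qed.

Lemma powR_suppE x a : 0 < x -> powR_supp x a = expR (a * ln x).
Proof. by move=> x0; rewrite /powR_supp /powR gt_eqF. Qed.

Definition powR_interp p q t := powR_supp p t * powR_supp q (1 - t).

Lemma powR_interp_ge0 p q t : 0 <= powR_interp p q t.
Proof. by rewrite mulr_ge0 ?powR_supp_ge0. Qed.

Lemma powR_interp_eq0 p q t : (powR_interp p q t == 0) = (p == 0) || (q == 0).
Proof. by rewrite mulf_eq0 !powR_supp_eq0. Qed.

Lemma powR_interp0 p q t : (p == 0) || (q == 0) -> powR_interp p q t = 0.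
Proof. by move=> pq0; apply/eqP; rewrite powR_interp_eq0. Qed.

Lemma powR_interpE p q t : 0 < p -> 0 < q ->
  powR_interp p q t = expR (t * ln p + (1 - t) * ln q).
Proof. by move=> p0 q0; rewrite /powR_interp !powR_suppE // expRD. Qed.

Lemma powR_interp_le p q t : 0 <= p -> 0 <= q -> 0 <= t <= 1 ->
  powR_interp p q t <= t * p + (1 - t) * q.
Proof.
move=> p0 q0 /andP[t0 t1].
have [pq0|] := boolP ((p == 0) || (q == 0)).
  by rewrite powR_interp0 // addr_ge0 // mulr_ge0 // subr_ge0.
rewrite negb_or => /andP[pn0 qn0].
have [pp qp] : 0 < p /\ 0 < q by rewrite !lt0r pn0 qn0.
rewrite powR_interpE // -{2}(lnK pp) -{2}(lnK qp).
by apply: expR_convex; rewrite t0.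
Qed.

Lemma powR_interp_log_convex p q s x y cx cy :
  0 <= p -> 0 <= q -> 0 <= s <= 1 -> 0 < cx -> 0 < cy ->
  powR_interp p q (s * x + (1 - s) * y) <=
  expR (s * ln cx + (1 - s) * ln cy) *
    (s * (powR_interp p q x / cx) + (1 - s) * (powR_interp p q y / cy)).
Proof.
move=> p0 q0 s01 cx0 cy0.
have [pq0|] := boolP ((p == 0) || (q == 0)).
  by rewrite !powR_interp0 // !mul0r !mulr0 addr0 mulr0.
rewrite negb_or => /andP[pn0 qn0].
have [pp qp] : 0 < p /\ 0 < q by rewrite !lt0r pn0 qn0.
rewrite !powR_interpE //.
have -> : (s * x + (1 - s) * y) * ln p + (1 - (s * x + (1 - s) * y)) * ln q =
    s * (x * ln p + (1 - x) * ln q) + (1 - s) * (y * ln p + (1 - y) * ln q).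
  by ring.
exact: expR_convex_scaled.
Qed.

End RealInequalities.

Section PetzSum.
Variables (R : realType) (I J : finType).
Variables (p : I -> R) (q : J -> R) (w : I -> J -> R).
Hypotheses (p_ge0 : forall i, 0 <= p i) (q_ge0 : forall j, 0 <= q j)
  (w_ge0 : forall i j, 0 <= w i j).

Definition petz_sum t := \sum_i \sum_j w i j * powR_interp (p i) (q j) t.

Let term_ge0 t i j : 0 <= w i j * powR_interp (p i) (q j) t.
Proof. by rewrite mulr_ge0 ?powR_interp_ge0. Qed.

Let row_ge0 t i : 0 <= \sum_j w i j * powR_interp (p i) (q j) t.
Proof. by apply: sumr_ge0 => j _; exact: term_ge0. Qed.

Lemma petz_sum_ge0 t : 0 <= petz_sum t.
Proof. by apply: sumr_ge0 => i _; exact: row_ge0. Qed.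

Lemma petz_sum_eq0 t s : petz_sum t = 0 -> petz_sum s = 0.
Proof.
move=> Qt0; apply: big1 => i _; apply: big1 => j _.
have Qi0 := psumr_eq0P (fun i _ => row_ge0 t i) Qt0 (i := i) isT.
have /eqP := psumr_eq0P (fun j _ => term_ge0 t i j) Qi0 (i := j) isT.
rewrite mulf_eq0 powR_interp_eq0 => wpq0.
by apply/eqP; rewrite mulf_eq0 powR_interp_eq0.
Qed.

Lemma ln_petz_sum_convex s x y : 0 <= s <= 1 ->
  0 < petz_sum x -> 0 < petz_sum y ->
  ln (petz_sum (s * x + (1 - s) * y)) <=
  s * ln (petz_sum x) + (1 - s) * ln (petz_sum y).
Proof.
move=> s01 Qx Qy.
set K := expR (s * ln (petz_sum x) + (1 - s) * ln (petz_sum y)).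
have Qz : 0 < petz_sum (s * x + (1 - s) * y).
  rewrite lt0r petz_sum_ge0 andbT; apply/eqP => /(petz_sum_eq0 x).
  by move/eqP; rewrite gt_eqF.
rewrite -[leRHS]expRK ler_ln ?posrE ?expR_gt0 //.
(* Hoelder's inequality: bound each term by weighted AM-GM after normalising
   the two endpoint sums to 1. *)
apply: (@le_trans _ _ (\sum_i \sum_j
   (K * s / petz_sum x * (w i j * powR_interp (p i) (q j) x) +
    K * (1 - s) / petz_sum y * (w i j * powR_interp (p i) (q j) y)))).
  apply: ler_sum => i _; apply: ler_sum => j _.
  have := powR_interp_log_convex x y (p_ge0 i) (q_ge0 j) s01 Qx Qy.
  move=> /(ler_wpM2l (w_ge0 i j)) /le_trans; apply.
  by rewrite le_eqVlt -/K; apply/orP; left; apply/eqP; ring.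
under eq_bigr do rewrite big_split /= -!mulr_sumr.
rewrite big_split /= -!mulr_sumr -/(petz_sum x) -/(petz_sum y).
by rewrite !mulfVK ?gt_eqF // -mulrDr subrKC mulr1.
Qed.

Hypotheses (p_sum1 : \sum_i p i = 1) (q_sum1 : \sum_j q j = 1)
  (w_row1 : forall i, \sum_j w i j = 1) (w_col1 : forall j, \sum_i w i j = 1).

Lemma petz_sum_le1 t : 0 <= t <= 1 -> petz_sum t <= 1.
Proof.
move=> t01.
apply: (@le_trans _ _
    (\sum_i \sum_j (t * (w i j * p i) + (1 - t) * (w i j * q j)))).
  apply: ler_sum => i _; apply: ler_sum => j _.
  by rewrite (mulrCA t) (mulrCA (1 - t)) -mulrDr ler_wpM2l // powR_interp_le.
rewrite (eq_bigr (fun i => t * p i + (1 - t) * \sum_j w i j * q j)); last first.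
  by move=> i _; rewrite big_split /= -!mulr_sumr -mulr_suml w_row1 mul1r.
rewrite big_split /= -!mulr_sumr p_sum1 exchange_big /=.
rewrite (eq_bigr q) ?q_sum1 ?mulr1 ?subrKC // => j _.
by rewrite -mulr_suml w_col1 mul1r.
Qed.

End PetzSum.

Section ConvexNonpos.
Variables (R : realType) (g : R -> R).
Hypothesis g_cvx : forall s x y : R,
  0 <= s <= 1 -> 0 <= x <= 1 -> 0 <= y <= 1 ->
  g (s * x + (1 - s) * y) <= s * g x + (1 - s) * g y.

Lemma convex_chord_le0 (s x e : R) : 0 <= s <= 1 -> 0 <= x <= 1 ->
  0 <= e <= 1 -> g e <= 0 -> g (s * x + (1 - s) * e) <= s * g x.
Proof.
move=> s01 x01 e01 ge; have /andP[_ s1] := s01.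
apply: le_trans (g_cvx s01 x01 e01) _.
by rewrite gerDl mulr_ge0_le0 // subr_ge0.
Qed.

Lemma convex_le0_ratio_bound (a b : R) : g 0 <= 0 -> g 1 <= 0 ->
  0 < a < 1 -> 0 < b < 1 ->
  g a * (a * (1 - b) + b * (1 - a)) <= a * (1 - a) * g b.
Proof.
move=> g0 g1 /andP[a0 a1] /andP[b0 b1].
have [a01 b01] : 0 <= a <= 1 /\ 0 <= b <= 1 by split; apply/andP; split; lra.
have [e0 e1] : 0 <= (0 : R) <= 1 /\ 0 <= (1 : R) <= 1 by rewrite !lexx ler01.
have ga : g a <= 0.
  have := convex_chord_le0 a01 e1 e0 g0; rewrite mulr1 mulr0 addr0.
  by move/le_trans; apply; rewrite mulr_ge0_le0 // (ltW a0).
have [ab|ba] := leP a b.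
  have s01 : 0 <= a / b <= 1.
    by rewrite (divr_ge0 (ltW a0) (ltW b0)) ler_pdivrMr // mul1r.
  have := convex_chord_le0 s01 b01 e0 g0.
  rewrite mulr0 addr0 divfK ?lt0r_neq0 // => /(ler_wpM2l (ltW b0)).
  rewrite mulrA mulrCA divff ?lt0r_neq0 // mulr1.
  have : 0 <= a * (1 - b) by rewrite mulr_ge0 //; lra.
  have : 0 <= 1 - a by lra.
  nra.
have [a1' b1'] : 0 < 1 - a /\ 0 < 1 - b by split; lra.
have s01 : 0 <= (1 - a) / (1 - b) <= 1.
  by rewrite (divr_ge0 (ltW a1') (ltW b1')) ler_pdivrMr // mul1r; lra.
have := convex_chord_le0 s01 b01 e1 g1; rewrite mulr1.
have -> : (1 - a) / (1 - b) * b + (1 - (1 - a) / (1 - b)) = a.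
  by field; rewrite gt_eqF.
move=> /(ler_wpM2l (ltW b1')).
rewrite mulrA mulrCA divff ?lt0r_neq0 // mulr1.
have : 0 <= b * (1 - a) by rewrite mulr_ge0 //; lra.
have : 0 <= a by lra.
nra.
Qed.

End ConvexNonpos.

Section RenyiOfTrace.
Variable R : realType.

Definition renyi_of (Q : R -> R) (t : R) : \bar R :=
  if Q t == 0 then +oo%E else (ln (Q t) / (t - 1))%:E.

Lemma renyi_of_ratio_bound (Q : R -> R) (a b : R) :
  (forall t : R, 0 <= Q t) -> Q 0 <= 1 -> Q 1 <= 1 ->
  (forall t s : R, Q t = 0 -> Q s = 0) ->
  (forall s x y : R, 0 <= s <= 1 -> 0 < Q x -> 0 < Q y ->
     ln (Q (s * x + (1 - s) * y)) <= s * ln (Q x) + (1 - s) * ln (Q y)) ->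
  0 < a < 1 -> 0 < b < 1 ->
  ((a * (1 - b) / (a - 2 * a * b + b))%:E * renyi_of Q b <= renyi_of Q a)%E.
Proof.
move=> Q_ge0 Q01 Q11 Q_eq0 lnQ_cvx a01 b01.
have /andP[a0 a1] := a01; have /andP[b0 b1] := b01.
have D_gt0 : 0 < a * (1 - b) + b * (1 - a).
  by rewrite addr_gt0 // mulr_gt0 // subr_gt0.
have DE : a - 2 * a * b + b = a * (1 - b) + b * (1 - a) by ring.
rewrite /renyi_of DE; have [Qb0|Qb0] := eqVneq (Q b) 0.
  rewrite (Q_eq0 _ a Qb0) eqxx mulry gtr0_sg ?mul1e //.
  by rewrite divr_gt0 // mulr_gt0 // subr_gt0.
have Q_gt0 t : 0 < Q t.
  by rewrite lt0r Q_ge0 andbT; apply: contra Qb0 => /eqP /(Q_eq0 _ b) ->.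
rewrite gt_eqF // -EFinM lee_fin.
have key := @convex_le0_ratio_bound R (fun t => ln (Q t))
  (fun s x y s01 _ _ => lnQ_cvx s x y s01 (Q_gt0 x) (Q_gt0 y))
  a b (ln_le0 Q01) (ln_le0 Q11) a01 b01.
rewrite -subr_ge0.
set D := a * (1 - b) + b * (1 - a) in D_gt0 key *.
have -> : ln (Q a) / (a - 1) - a * (1 - b) / D * (ln (Q b) / (b - 1)) =
    (a * (1 - a) * ln (Q b) - ln (Q a) * D) / ((1 - a) * D).
  have : [/\ a - 1 != 0, 1 - a != 0, b - 1 != 0 & D != 0].
    by split; apply/negP => /eqP; lra.
  by case=> *; field; apply/and4P.
by rewrite divr_ge0 ?subr_ge0 // mulr_ge0 //; lra.
Qed.

End RenyiOfTrace.

Section SpectralData.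
Variables (R : realType) (n : nat).
Local Notation C := R[i].
Local Open Scope sesquilinear_scope.
Implicit Types (A B M : 'M[C]_n).

Lemma complex_ge0E (z : C) :
  0 <= z -> z = (complex.Re z)%:C%C /\ 0 <= complex.Re z.
Proof. by case: z => x y; rewrite lecE /= => /andP[/eqP -> x0]. Qed.

Lemma hermmx_spectralE A : A \is hermsymmx ->
  A = (spectralmx A)^t* *m diag_mx (spectral_diag A) *m spectralmx A.
Proof.
move=> /hermitian_normalmx /orthomx_spectralP {1}->.
by rewrite invmx_unitary // spectral_unitarymx.
Qed.

Lemma psdmx_spectral_diag_ge0 A j : psdmx A -> 0 <= spectral_diag A 0 j.
Proof.
move=> [A_herm A_psd]; set P := spectralmx A; set d := spectral_diag A.
have := A_psd (delta_mx 0 j *m P).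
rewrite {1}(hermmx_spectralE A_herm) -/P -/d trmx_mul map_mxM !mulmxA.
rewrite !mulmxtVK ?spectral_unitarymx // -rowE row_diag_mx -scalemxAl mxE.
rewrite !mxE (bigD1 j) //= big1 => [|k kj]; last first.
  by rewrite !mxE (negbTE kj) mul0r.
by rewrite !mxE !eqxx /= conjC1 mulr1 addr0 mulr1.
Qed.

Definition eigval A i : R := complex.Re (spectral_diag A 0 i).

Lemma psdmx_eigvalE A i : psdmx A -> spectral_diag A 0 i = (eigval A i)%:C%C.
Proof. by move/(psdmx_spectral_diag_ge0 i)/complex_ge0E => []. Qed.

Lemma psdmx_eigval_ge0 A i : psdmx A -> 0 <= eigval A i.
Proof. by move/(psdmx_spectral_diag_ge0 i)/complex_ge0E => []. Qed.

Lemma density_eigval_sum1 A : density A -> \sum_i eigval A i = 1.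
Proof.
move=> [A_psd A_tr1]; apply: (@complexI R); rewrite rmorph_sum rmorph1 -A_tr1.
rewrite {2}(hermmx_spectralE A_psd.1) -mulmxA mxtrace_mulC.
rewrite mulmxtVK ?spectral_unitarymx // mxtrace_diag.
by apply: eq_bigr => i _; rewrite psdmx_eigvalE.
Qed.

Lemma psdmx_mxpow_supp A t : psdmx A ->
  mxpow_supp t A = (spectralmx A)^t* *m
    diag_mx (\row_i (powR_supp (eigval A i) t)%:C%C) *m spectralmx A.
Proof.
move=> A_psd; rewrite /mxpow_supp (invmx_unitary (spectral_unitarymx A)).
apply: (congr1 (fun d => _ *m diag_mx d *m _)); apply/rowP => i.
rewrite !mxE psdmx_eigvalE // /powR_supp /= fmorph_eq0.
by case: ifP.
Qed.

Lemma unitarymx_row_sum M i : M \is unitarymx ->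
  \sum_j M i j * (M i j)^* = 1.
Proof.
move/unitarymxP/matrixP/(_ i i); rewrite !mxE eqxx mulr1n => <-.
by apply: eq_bigr => j _; rewrite !mxE.
Qed.

Lemma unitarymx_col_sum M j : M \is unitarymx ->
  \sum_i M i j * (M i j)^* = 1.
Proof.
rewrite -trmxC_unitary => /(unitarymx_row_sum j) <-.
by apply: eq_bigr => i _; rewrite !mxE conjCK mulrC.
Qed.

Definition overlap_mx A B := spectralmx A *m (spectralmx B)^t*.

Definition overlap A B i j : R :=
  complex.Re (overlap_mx A B i j * (overlap_mx A B i j)^*).

Lemma overlapE A B i j :
  overlap_mx A B i j * (overlap_mx A B i j)^* = (overlap A B i j)%:C%C.
Proof. exact: (complex_ge0E (mul_conjC_ge0 _)).1. Qed.

Lemma overlap_ge0 A B i j : 0 <= overlap A B i j.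
Proof. exact: (complex_ge0E (mul_conjC_ge0 _)).2. Qed.

Lemma overlap_mx_unitary A B : overlap_mx A B \is unitarymx.
Proof. by rewrite mul_unitarymx ?trmxC_unitary ?spectral_unitarymx. Qed.

Lemma overlap_row_sum1 A B i : \sum_j overlap A B i j = 1.
Proof.
apply: (@complexI R); rewrite rmorph_sum rmorph1.
rewrite -(unitarymx_row_sum i (overlap_mx_unitary A B)).
by apply: eq_bigr => j _; rewrite overlapE.
Qed.

Lemma overlap_col_sum1 A B j : \sum_i overlap A B i j = 1.
Proof.
apply: (@complexI R); rewrite rmorph_sum rmorph1.
rewrite -(unitarymx_col_sum j (overlap_mx_unitary A B)).
by apply: eq_bigr => i _; rewrite overlapE.
Qed.

Lemma mxtrace_diag_conj (P1 P2 : 'M[C]_n) (d1 d2 : 'rV[C]_n) :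
  \tr (P1^t* *m diag_mx d1 *m P1 *m (P2^t* *m diag_mx d2 *m P2)) =
  \sum_i \sum_j d1 0 i * d2 0 j *
    ((P1 *m P2^t*) i j * ((P1 *m P2^t*) i j)^*).
Proof.
set W := P1 *m P2^t*.
have WtE : P2 *m P1^t* = W^t* by rewrite /W trmx_mul map_mxM trmxCK.
have -> : P1^t* *m diag_mx d1 *m P1 *m (P2^t* *m diag_mx d2 *m P2) =
    P1^t* *m (diag_mx d1 *m W *m diag_mx d2 *m P2) by rewrite /W !mulmxA.
clearbody W; rewrite mxtrace_mulC -[X in \tr X]mulmxA WtE.
apply: eq_bigr => i _; rewrite mxE; apply: eq_bigr => j _.
by rewrite mul_mx_diag mul_diag_mx !mxE; ring.
Qed.

Lemma petz_trace_overlap A B t : psdmx A -> psdmx B ->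
  petz_trace t A B = petz_sum (eigval A) (eigval B) (overlap A B) t.
Proof.
move=> A_psd B_psd.
rewrite /petz_trace !psdmx_mxpow_supp // mxtrace_diag_conj -/(overlap_mx A B).
rewrite [X in complex.Re X](_ : _ =
  (petz_sum (eigval A) (eigval B) (overlap A B) t)%:C%C) //.
rewrite rmorph_sum; apply: eq_bigr => i _; rewrite rmorph_sum.
by apply: eq_bigr => j _; rewrite overlapE !mxE -!rmorphM mulrC.
Qed.

End SpectralData.

Theorem mainTheorem13 (R : realType) (n : nat) (rho sigma : 'M[R[i]]_n)
    (a b : R) :
  density rho -> density sigma ->
  0 < a < 1 -> 0 < b < 1 ->
  ((a * (1 - b) / (a - 2 * a * b + b))%:E * petz_renyi b rho sigma
     <= petz_renyi a rho sigma)%E.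
Proof.
move=> rho_dens sigma_dens.
set p := eigval rho; set q := eigval sigma; set w := overlap rho sigma.
have p_ge0 i : 0 <= p i by exact: psdmx_eigval_ge0 rho_dens.1.
have q_ge0 j : 0 <= q j by exact: psdmx_eigval_ge0 sigma_dens.1.
have w_ge0 i j : 0 <= w i j by exact: overlap_ge0.
have Q_le1 t : 0 <= t <= 1 -> petz_sum p q w t <= 1.
  apply: petz_sum_le1 => //.
  - exact: density_eigval_sum1 rho_dens.
  - exact: density_eigval_sum1 sigma_dens.
  - exact: overlap_row_sum1.
  - exact: overlap_col_sum1.
have renyiE t : petz_renyi t rho sigma = renyi_of (petz_sum p q w) t.
  by rewrite /petz_renyi (petz_trace_overlap t rho_dens.1 sigma_dens.1).
rewrite !renyiE; apply: renyi_of_ratio_bound.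
- exact: petz_sum_ge0.
- by apply: Q_le1; rewrite lexx ler01.
- by apply: Q_le1; rewrite lexx ler01.
- exact: petz_sum_eq0.
- exact: ln_petz_sum_convex.
Qed.
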